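(* Assume the standing setting in the context, and assume that for every $\boldsymbol a\in\mathrm{Dom}(\boldsymbol A)$, $\Pr^+_\Omega(h(\boldsymbol x)\mid s_1,\boldsymbol a)\ge \Pr^+_\Omega(h(\boldsymbol x)\mid s_0,\boldsymbol a)$. Suppose the data selection does not depend directly on the admissible variables: let $\boldsymbol U\subseteq\boldsymbol X\cup\{Y\}$ with $S\notin\boldsymbol U$ and $\boldsymbol A\cap\boldsymbol U=\emptyset$ be such that, under $\Omega$, the full vector of variables $(\boldsymbol X,Y)$ (in particular $\boldsymbol A$ together with $\boldsymbol X$) is conditionally independent of $C$ given $(S,\boldsymbol U)$ (this holds, e.g., for $\boldsymbol U=\boldsymbol{Pa}(C)\setminus\{S\}$ when $\Omega$ is Markov compatible with a data collection diagram in which $C$ has no children and $\boldsymbol A\cap\boldsymbol{Pa}(C)=\emptyset$). Assume all conditional probabilities below are well defined (positivity). Then $$\digamma(\Omega)=\frac{1}{|\mathrm{Dom}(\boldsymbol A)|}\sum_{\boldsymbol a\in\mathrm{Dom}(\boldsymbol A)}\sum_{\boldsymbol u\in\mathrm{Dom}(\boldsymbol U)}\Big(\Pr^+_\Delta(h(\boldsymbol x)\mid s_1,\boldsymbol a,\boldsymbol u)\,w(s_1,\boldsymbol u,\boldsymbol a)-\Pr^+_\Delta(h(\boldsymbol x)\mid s_0,\boldsymbol a,\boldsymbol u)\,w(s_0,\boldsymbol u,\boldsymbol a)\Big),$$ where $$w(s,\boldsymbol u,\boldsymbol a)=\frac{\Delta(\boldsymbol A=\boldsymbol a\mid S=s,\boldsymbol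 U=\boldsymbol u)\,\Omega(S=s,\boldsymbol U=\boldsymbol u)}{\sum_{\boldsymbol u^*\in\mathrm{Dom}(\boldsymbol U)}\Delta(\boldsymbol A=\boldsymbol a\mid S=s,\boldsymbol U=\boldsymbol u^* )\,\Omega(S=s,\boldsymbol U=\boldsymbol u^* )}.$$ (In particular $\digamma(\Omega)$ is determined by $\Delta$ and the statistics $\Omega(S=s,\boldsymbol U=\boldsymbol u)$ alone.)
   Context: Standing setting. All variables have finite domains. $\boldsymbol X=(X_1,\dots,X_n)$ is a vector of features, $Y\in\{0,1\}$ is the label, and $C\in\{0,1\}$ is a selection indicator. $\Omega$ is a joint distribution of $(\boldsymbol X,Y,C)$; its marginal on $(\boldsymbol X,Y)$ is the target population. The biased distribution is $\Delta(\boldsymbol x,y)=\Omega(\boldsymbol x,y\mid C=1)$. A protected attribute $S$ is one of the features, with $\mathrm{Dom}(S)=\{s_0,s_1\}$. A set of admissible attributes $\boldsymbol A\subseteq \boldsymbol X\cup\{Y\}$ with $S\notin\boldsymbol A$ is fixed. A classifier is a function $h:\mathrm{Dom}(\boldsymbol X)\to\{0,1\}$. For a distribution $P$ and an event $E$, write $\Pr^+_P(h(\boldsymbol x)\mid E)=P(h(\boldsymbol X)=1\mid E)$; conditioning on $s,\boldsymbol a,\boldsymbol u$ means conditioning on $S=s,\boldsymbol A=\boldsymbol a,\boldsymbol U=\boldsymbol u$. The fairness query of $h$ on $P$ is $$\digamma(P)=\frac{1}{|\mathrm{Dom}(\boldsymbol A)|}\sum_{\boldsymbol a\in\mathrm{Dom}(\boldsymbol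 A)}\Big|\Pr^+_P(h(\boldsymbol x)\mid S=s_1,\boldsymbol A=\boldsymbol a)-\Pr^+_P(h(\boldsymbol x)\mid S=s_0,\boldsymbol A=\boldsymbol a)\Big|.$$ A data collection diagram is a DAG over $\boldsymbol X\cup\{Y\}\cup\{C\}$ in which $C$ has no children; $\boldsymbol{Pa}(C)$ is the set of parents of $C$. *)

From mathcomp Require Import all_boot all_order all_algebra.
Set Implicit Arguments. Unset Strict Implicit. Unset Printing Implicit Defensive.
Import Order.TTheory GRing.Theory Num.Theory.
Local Open Scope ring_scope.

Section Defs.
Variable R : realFieldType.

Definition Pr (T : finType) (P : T -> R) (E : pred T) : R := \sum_(t | E t) P t.

Definition Prc (T : finType) (P : T -> R) (E F : pred T) : R :=
  Pr P (fun t => E t && F t) / Pr P F.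

Variable XT : finType.
(* Omega is a distribution on Dom(X) x {0,1} (Y) x {0,1} (C). *)

Definition popul (Om : {ffun XT * bool * bool -> R}) : {ffun XT * bool -> R} :=
  [ffun xy => Om (xy, true) + Om (xy, false)].

(* biased distribution Delta(x,y) = Omega(x,y | C = 1) *)
Definition biased (Om : {ffun XT * bool * bool -> R}) : {ffun XT * bool -> R} :=
  [ffun xy => Om (xy, true) / Pr Om (fun t => t.2)].

Variables (AT UT : finType).

(* Pr^+_P(h(x) | S = s, A = a), with Dom(S) = {s0,s1} encoded as bool,
   s1 = true, s0 = false *)
Definition posrate (P : {ffun XT * bool -> R}) (h : XT -> bool)
  (S : XT -> bool) (A : XT * bool -> AT) (s : bool) (a : AT) : R :=
  Prc P (fun xy => h xy.1) (fun xy => (S xy.1 == s) && (A xy == a)).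

Definition posrateU (P : {ffun XT * bool -> R}) (h : XT -> bool)
  (S : XT -> bool) (A : XT * bool -> AT) (U : XT * bool -> UT)
  (s : bool) (a : AT) (u : UT) : R :=
  Prc P (fun xy => h xy.1)
    (fun xy => [&& S xy.1 == s, A xy == a & U xy == u]).

Definition fairness (P : {ffun XT * bool -> R}) (h : XT -> bool)
  (S : XT -> bool) (A : XT * bool -> AT) : R :=
  (#|AT|%:R)^-1 *
  \sum_(a : AT) `| posrate P h S A true a - posrate P h S A false a |.

Definition wnum (Om : {ffun XT * bool * bool -> R})
  (S : XT -> bool) (A : XT * bool -> AT) (U : XT * bool -> UT)
  (s : bool) (u : UT) (a : AT) : R :=
  Prc (biased Om) (fun xy => A xy == a)
      (fun xy => (S xy.1 == s) && (U xy == u))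
  * Pr (popul Om) (fun xy => (S xy.1 == s) && (U xy == u)).

Definition weight (Om : {ffun XT * bool * bool -> R})
  (S : XT -> bool) (A : XT * bool -> AT) (U : XT * bool -> UT)
  (s : bool) (u : UT) (a : AT) : R :=
  wnum Om S A U s u a / \sum_(u' : UT) wnum Om S A U s u' a.

(* (X,Y) is conditionally independent of C given (S,U) under Omega
   (product form of conditional independence) *)
Definition XY_indep_C_given_SU (Om : {ffun XT * bool * bool -> R})
  (S : XT -> bool) (U : XT * bool -> UT) : Prop :=
  forall (xy : XT * bool) (c s : bool) (u : UT),
    Pr Om (fun t => [&& t.1 == xy, t.2 == c, S t.1.1 == s & U t.1 == u])
    * Pr Om (fun t => (S t.1.1 == s) && (U t.1 == u))
    = Pr Om (fun t => [&& t.1 == xy, S t.1.1 == s & U t.1 == u])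
      * Pr Om (fun t => [&& t.2 == c, S t.1.1 == s & U t.1 == u]).

End Defs.

(* Conditional independence of (X,Y) and C given (S,U) says that on each stratum
   {S = s, U = u} the selected mass Om(x,y,C=1) is proportional to the population
   mass, so Delta restricted to a stratum is a rescaling of the population and all
   conditional probabilities inside a stratum coincide under Delta and Omega.
   Hence Delta(A = a | s,u) Omega(s,u) = Omega(s,a,u) and
   Pr_Delta(h | s,a,u) = Pr_Omega(h | s,a,u); the weights w(s,u,a) are therefore
   Omega(u | s,a), and summing over u recovers Pr_Omega(h | s,a).  The hypothesis
   on the sign of the rate differences removes the absolute values. *)
From mathcomp Require Import all_boot all_order all_algebra.
From mathcomp Require Import ring.
Import Order.TTheory GRing.Theory Num.Theory.
Local Open Scope ring_scope.
Set Implicit Arguments. Unset Strict Implicit.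

Section Events.
Variables (R : realFieldType) (T : finType) (P : T -> R).

Lemma eq_Pr (E F : pred T) : E =1 F -> Pr P E = Pr P F.
Proof. by move=> eEF; rewrite /Pr (eq_bigl _ _ eEF). Qed.

Lemma Pr_pred1 (x : T) : Pr P (pred1 x) = P x.
Proof. exact: big_pred1_eq. Qed.

Lemma Pr_subset (E F : pred T) :
  (forall t, 0 <= P t) -> (forall t, E t -> F t) -> Pr P E <= Pr P F.
Proof.
move=> P_ge0 sEF; rewrite /Pr [X in X <= _]big_mkcond [X in _ <= X]big_mkcond.
apply: ler_sum => t _; case: ifP => [/sEF -> //|_]; by case: ifP.
Qed.

Lemma Pr_partition (V : finType) (f : T -> V) (F : pred T) :
  \sum_(v : V) Pr P (fun t => F t && (f t == v)) = Pr P F.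
Proof. by rewrite /Pr (partition_big f xpredT). Qed.

Lemma Prc_mulr (E F : pred T) :
  Pr P F != 0 -> Prc P E F * Pr P F = Pr P (fun t => E t && F t).
Proof. by move=> F_neq0; rewrite /Prc divfK. Qed.

End Events.

Lemma Pr_pair (R : realFieldType) (T1 T2 : finType) (P : T1 * T2 -> R)
    (G : T1 -> T2 -> bool) :
  Pr P (fun t => G t.1 t.2) = \sum_(p : T1) \sum_(c | G p c) P (p, c).
Proof. by rewrite pair_big_dep; apply: eq_big => -[]. Qed.

Section Selection.
Variables (R : realFieldType) (XT : finType) (Om : {ffun XT * bool * bool -> R}).

Lemma Pr_popul (Q : pred (XT * bool)) : Pr Om (fun t => Q t.1) = Pr (popul Om) Q.
Proof.
rewrite (Pr_pair _ (fun p _ => Q p)) [RHS]big_mkcond; apply: eq_bigr => p _.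
by rewrite ffunE; case: (Q p); rewrite ?big_bool ?big_pred0_eq.
Qed.

Lemma Pr_selected (Q : pred (XT * bool)) :
  Pr Om (fun t => t.2 && Q t.1) = \sum_(p | Q p) Om (p, true).
Proof.
rewrite (Pr_pair _ (fun p c => c && Q p)) [RHS]big_mkcond; apply: eq_bigr => p _.
by rewrite big_mkcond big_bool /=; case: (Q p); rewrite ?addr0.
Qed.

Lemma Pr_biased (Q : pred (XT * bool)) :
  Pr (biased Om) Q = Pr Om (fun t => t.2 && Q t.1) / Pr Om (fun t => t.2).
Proof. by rewrite Pr_selected /Pr mulr_suml; apply: eq_bigr => p _; rewrite ffunE. Qed.

Hypotheses (Om_ge0 : forall t, 0 <= Om t) (posC : 0 < Pr Om (fun t => t.2)).

Lemma Pr_biased_gt0 (Q : pred (XT * bool)) :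
  0 < Pr (biased Om) Q -> 0 < Pr (popul Om) Q.
Proof.
rewrite Pr_biased pmulr_lgt0 ?invr_gt0 // -Pr_popul => /lt_le_trans; apply.
by apply: Pr_subset => // t /andP[].
Qed.

Variables (UT : finType) (S : XT -> bool) (U : XT * bool -> UT).
Hypothesis CI : XY_indep_C_given_SU Om S U.

Definition stratum (s : bool) (u : UT) : pred (XT * bool) :=
  fun xy => (S xy.1 == s) && (U xy == u).

Lemma biased_popul_point (xy : XT * bool) :
  biased Om xy * Pr (popul Om) (stratum (S xy.1) (U xy))
  = popul Om xy * Pr (biased Om) (stratum (S xy.1) (U xy)).
Proof.
set s := S xy.1; set u := U xy.
have is_xy p : [&& p == xy, S p.1 == s & U p == u] = (p == xy).
  by case: eqP => [->|]; rewrite ?eqxx.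
have sel_xy : Pr Om (fun t => [&& t.1 == xy, t.2 == true, S t.1.1 == s & U t.1 == u])
    = Om (xy, true).
  rewrite -Pr_pred1; apply: eq_Pr => -[p c] /=.
  by case: c; rewrite xpair_eqE /= ?andbF ?andbT ?is_xy.
have popul_xy : Pr Om (fun t => [&& t.1 == xy, S t.1.1 == s & U t.1 == u]) = popul Om xy.
  rewrite (Pr_popul (fun p => [&& p == xy, S p.1 == s & U p == u])).
  by rewrite (eq_Pr _ is_xy) Pr_pred1.
have sel_st : Pr Om (fun t => [&& t.2 == true, S t.1.1 == s & U t.1 == u])
    = Pr (biased Om) (stratum s u) * Pr Om (fun t => t.2).
  by rewrite Pr_biased divfK ?gt_eqF //; apply: eq_Pr => -[p c]; rewrite eqb_id.
have := CI xy true s u.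
rewrite sel_xy popul_xy sel_st (Pr_popul (stratum s u)) mulrA => CIxy.
by rewrite ffunE mulrAC CIxy mulfK ?gt_eqF.
Qed.

Lemma biased_stratum_scaling (s : bool) (u : UT) (F : pred (XT * bool)) :
  (forall xy, F xy -> stratum s u xy) ->
  Pr (biased Om) F * Pr (popul Om) (stratum s u)
  = Pr (popul Om) F * Pr (biased Om) (stratum s u).
Proof.
move=> sF; rewrite /Pr !mulr_suml; apply: eq_bigr => xy /sF /andP[/eqP <- /eqP <-].
exact: biased_popul_point.
Qed.

Lemma stratum_gt0 (s : bool) (u : UT) (F : pred (XT * bool)) :
  (forall xy, F xy -> stratum s u xy) -> 0 < Pr (biased Om) F ->
  0 < Pr (popul Om) (stratum s u) /\ 0 < Pr (biased Om) (stratum s u).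
Proof.
move=> sF DF_gt0; have OmF_gt0 := Pr_biased_gt0 DF_gt0.
have Om_st_gt0 : 0 < Pr (popul Om) (stratum s u).
  apply: lt_le_trans OmF_gt0 _; apply: Pr_subset sF => xy.
  by rewrite ffunE addr_ge0.
split=> //.
by rewrite -(pmulr_rgt0 _ OmF_gt0) -(biased_stratum_scaling sF) mulr_gt0.
Qed.

Lemma Prc_biased_stratum (s : bool) (u : UT) (E F : pred (XT * bool)) :
  (forall xy, F xy -> stratum s u xy) -> 0 < Pr (biased Om) F ->
  Prc (biased Om) E F = Prc (popul Om) E F.
Proof.
move=> sF DF_gt0; have [Om_st_gt0 D_st_gt0] := stratum_gt0 sF DF_gt0.
have sEF xy : E xy && F xy -> stratum s u xy by case/andP=> _ /sF.
have scale G := mulfK (lt0r_neq0 Om_st_gt0) (Pr (biased Om) G).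
rewrite /Prc -(scale F) -(scale (fun t => E t && F t)).
rewrite (biased_stratum_scaling sF) (biased_stratum_scaling sEF).
have OmF_gt0 := Pr_biased_gt0 DF_gt0.
by field; rewrite !gt_eqF.
Qed.

End Selection.

Section Reweighting.
Variables (R : realFieldType) (XT AT UT : finType) (Om : {ffun XT * bool * bool -> R}).
Hypotheses (Om_ge0 : forall t, 0 <= Om t) (posC : 0 < Pr Om (fun t => t.2)).
Variables (h : XT -> bool) (S : XT -> bool) (A : XT * bool -> AT) (U : XT * bool -> UT).
Hypothesis CI : XY_indep_C_given_SU Om S U.
Variables (s : bool) (a : AT).
Hypothesis posD : forall u : UT,
  0 < Pr (biased Om) (fun xy => [&& S xy.1 == s, A xy == a & U xy == u]).

Lemma wnum_popul (u : UT) :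
  wnum Om S A U s u a = Pr (popul Om) (fun xy => [&& S xy.1 == s, A xy == a & U xy == u]).
Proof.
have in_stratum xy : [&& S xy.1 == s, A xy == a & U xy == u] -> stratum S U s u xy.
  by rewrite /stratum; case/and3P=> -> _ ->.
have [Om_st_gt0 D_st_gt0] := stratum_gt0 Om_ge0 posC CI in_stratum (posD u).
rewrite /wnum (Prc_biased_stratum Om_ge0 posC CI _
  (fun xy (st : stratum S U s u xy) => st) D_st_gt0).
by rewrite Prc_mulr ?gt_eqF //; apply: eq_Pr => xy; rewrite andbCA.
Qed.

Lemma posrateU_biased (u : UT) :
  posrateU (biased Om) h S A U s a u
  = Prc (popul Om) (fun xy => h xy.1) (fun xy => [&& S xy.1 == s, A xy == a & U xy == u]).
Proof.
apply: (Prc_biased_stratum Om_ge0 posC CI (s := s) (u := u) _ _ (posD u)) => xy.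
by rewrite /stratum; case/and3P=> -> _ ->.
Qed.

Lemma sum_posrateU_weight :
  \sum_(u : UT) posrateU (biased Om) h S A U s a u * weight Om S A U s u a
  = posrate (popul Om) h S A s a.
Proof.
set sa := fun xy => (S xy.1 == s) && (A xy == a).
have sum_wnum : \sum_(u : UT) wnum Om S A U s u a = Pr (popul Om) sa.
  rewrite -(Pr_partition (popul Om) U sa); apply: eq_bigr => u _.
  by rewrite wnum_popul; apply: eq_Pr => xy; rewrite andbA.
have term u : posrateU (biased Om) h S A U s a u * weight Om S A U s u a
    = Pr (popul Om) (fun xy => (h xy.1 && sa xy) && (U xy == u)) / Pr (popul Om) sa.
  rewrite /weight sum_wnum wnum_popul posrateU_biased mulrA.
  rewrite Prc_mulr ?gt_eqF ?(Pr_biased_gt0 Om_ge0 posC (posD u)) //.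
  by congr (_ / _); apply: eq_Pr => xy; rewrite !andbA.
by rewrite (eq_bigr _ (fun u _ => term u)) -mulr_suml Pr_partition.
Qed.

End Reweighting.

Theorem proposition6 (R : realFieldType) (XT AT UT : finType)
  (Om : {ffun XT * bool * bool -> R})
  (Om_ge0 : forall t, 0 <= Om t) (Om_sum1 : \sum_t Om t = 1)
  (h : XT -> bool) (S : XT -> bool)
  (A : XT * bool -> AT) (U : XT * bool -> UT)
  (* positivity: all conditional probabilities involved are well defined *)
  (posC : 0 < Pr Om (fun t => t.2))
  (posOm : forall (s : bool) (a : AT),
     0 < Pr (popul Om) (fun xy => (S xy.1 == s) && (A xy == a)))
  (posD : forall (s : bool) (a : AT) (u : UT),
     0 < Pr (biased Om) (fun xy => [&& S xy.1 == s, A xy == a & U xy == u]))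
  (* Pr^+_Omega(h | s1, a) >= Pr^+_Omega(h | s0, a) *)
  (mono : forall a : AT,
     posrate (popul Om) h S A false a <= posrate (popul Om) h S A true a)
  (* (X,Y) independent of C given (S,U) under Omega *)
  (CI : XY_indep_C_given_SU Om S U) :
  fairness (popul Om) h S A =
  (#|AT|%:R)^-1 *
  \sum_(a : AT) \sum_(u : UT)
     (posrateU (biased Om) h S A U true a u * weight Om S A U true u a
      - posrateU (biased Om) h S A U false a u * weight Om S A U false u a).
Proof.
rewrite /fairness; congr (_ * _); apply: eq_bigr => a _.
rewrite ger0_norm ?subr_ge0 // sumrB.
by rewrite !(sum_posrateU_weight Om_ge0 posC h CI (posD _ a)).
Qed.
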